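(* For every integer $\ell\ge 1$, the graph $H_\ell$ is $3$-regular, planar, $2$-edge-connected, and has $2^{\ell+1}+2^\ell-2$ vertices.
   Context: For an integer $\ell\ge 1$, $H_\ell$ is the graph with vertex set $V_\ell=\{v_{h,j} : h\in\{-\ell,\dots,\ell\},\ j\in\{1,\dots,2^{\ell-|h|}\}\}$ and with the following edges: (1) $v_{h,j}v_{h-1,2j-1}$ and $v_{h,j}v_{h-1,2j}$ for every $h\in\{1,\dots,\ell\}$ and $j\in\{1,\dots,2^{\ell-h}\}$; (2) $v_{h,j}v_{h+1,2j-1}$ and $v_{h,j}v_{h+1,2j}$ for every $h\in\{-\ell,\dots,-1\}$ and $j\in\{1,\dots,2^{\ell-|h|}\}$; (3) the edge $v_{\ell,1}v_{-\ell,1}$; (4) the edges $v_{0,2j-1}v_{0,2j}$ for every $j\in\{1,\dots,2^{\ell-1}\}$. *)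

From Stdlib Require Import Reals.
From mathcomp Require Import all_boot.

Set Implicit Arguments.
Unset Strict Implicit.
Unset Printing Implicit Defensive.

Definition cubic (T : finType) (e : rel T) : Prop :=
  forall x : T, #|[set y | e x y]| = 3.

Definition connectedg (T : finType) (e : rel T) : Prop :=
  forall x y : T, connect e x y.

Definition remove_edge (T : finType) (e : rel T) (a b : T) : rel T :=
  [rel x y | e x y && ~~ (((x == a) && (y == b)) || ((x == b) && (y == a)))].

Definition two_edge_connected (T : finType) (e : rel T) : Prop :=
  1 < #|T| /\ connectedg e /\
  forall a b : T, e a b -> connectedg (remove_edge e a b).

Definition point := (R * R)%type.

Definition cont_on01 (g : R -> point) : Prop :=
  forall t : R, (Rle R0 t /\ Rle t R1) ->
  forall eps : R, Rlt R0 eps -> exists delta : R, Rlt R0 delta /\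
    forall s : R, (Rle R0 s /\ Rle s R1) -> Rlt (Rabs (Rminus s t)) delta ->
      Rlt (Rabs (Rminus (fst (g s)) (fst (g t)))) eps /\
      Rlt (Rabs (Rminus (snd (g s)) (snd (g t)))) eps.

Definition injective_on01 (g : R -> point) : Prop :=
  forall s t : R, (Rle R0 s /\ Rle s R1) -> (Rle R0 t /\ Rle t R1) -> g s = g t -> s = t.

Definition jordan_arc (g : R -> point) : Prop :=
  cont_on01 g /\ injective_on01 g.

Definition planar (T : finType) (e : rel T) : Prop :=
  exists (pos : T -> point) (arc : T -> T -> R -> point),
    injective pos /\
    (forall x y : T, e x y ->
       jordan_arc (arc x y) /\ arc x y R0 = pos x /\ arc x y R1 = pos y) /\
    (forall (x y z : T) (t : R), e x y -> (Rlt R0 t /\ Rlt t R1) -> arc x y t <> pos z) /\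
    (forall (x y u v : T) (s t : R), e x y -> e u v ->
       ~ ((x = u /\ y = v) \/ (x = v /\ y = u)) ->
       (Rlt R0 s /\ Rlt s R1) -> (Rlt R0 t /\ Rlt t R1) -> arc x y s <> arc u v t).

(* Vertex v_{h,j} (h in -l..l, j in 1..2^(l-|h|)) is encoded as the pair *)
(* (i, j0) with i = h + l in 0..2l and j0 = j - 1 in 0..2^(l-|h|)-1.     *)

Definition habs (i l : nat) : nat := (i - l) + (l - i).

Definition Hvtx (l : nat) :=
  {p : 'I_(2 * l + 1) * 'I_(2 ^ l) | (p.2 : nat) < 2 ^ (l - habs p.1 l)}.

Definition hlev (l : nat) (x : Hvtx l) : nat := (val x).1.
Definition hidx (l : nat) (x : Hvtx l) : nat := (val x).2.

(* the edges as listed in the definition, each listed from one endpoint *)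
Definition Hdedge (l : nat) (x y : Hvtx l) : bool :=
  let i := hlev x in let j := hidx x in
  let i' := hlev y in let j' := hidx y in
  [|| (* (1): h >= 1, v_{h,j} -- v_{h-1,2j-1}, v_{h-1,2j} *)
      [&& l < i, i' == i.-1 & ((j' == 2 * j) || (j' == 2 * j + 1))],
      (* (2): h <= -1, v_{h,j} -- v_{h+1,2j-1}, v_{h+1,2j} *)
      [&& i < l, i' == i.+1 & ((j' == 2 * j) || (j' == 2 * j + 1))],
      (* (3): v_{l,1} -- v_{-l,1} *)
      [&& i == 2 * l, j == 0, i' == 0 & j' == 0]
    | (* (4): v_{0,2j-1} -- v_{0,2j} *)
      [&& i == l, i' == l, ~~ odd j & j' == j.+1]].

Definition Hadj (l : nat) : rel (Hvtx l) :=
  [rel x y | Hdedge x y || Hdedge y x].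

(* Write i = h + l for the level of v_{h,j}, so levels run from 0 to 2l and
   level i has 2^(l - |i - l|) vertices; summing this over the levels gives the
   vertex count.  Apart from the root edge v_{l,1} v_{-l,1} and the matching on
   the middle level, every edge joins a vertex to its parent in one of two binary
   trees, rooted at levels 0 and 2l and sharing the middle level as leaves, so each
   vertex has exactly three neighbours.

   Drawing level i at height i, with its vertices at abscissae 1, 2, ... and the
   two roots on the axis x = 0, gives a planar straight-line drawing: tree edges
   between levels i and i+1 stay in that open strip, where they are ordered like
   their endpoints; middle edges are disjoint unit segments on the line y = l; and
   the root edge is the only edge on the axis.

   For 2-edge-connectivity it suffices that every edge lies on a cycle.  The tree
   edges alone connect the graph, since every vertex climbs to the top root; so an
   edge that is not a tree edge lies on a cycle.  A tree edge between levels i and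
   i+1 closes up through a descending path from its lower end to the bottom root,
   the root edge, and a descending path from the top root to its upper end. *)

From Stdlib Require Import Reals Lra.
From mathcomp Require Import all_boot zify.

Set Implicit Arguments.
Unset Strict Implicit.

Definition level_size (l i : nat) : nat := 2 ^ (l - habs i l).

Lemma level_size_gt0 l i : 0 < level_size l i.
Proof. by rewrite expn_gt0. Qed.

Lemma level_size_le l i : level_size l i <= 2 ^ l.
Proof. by rewrite leq_pexp2l ?leq_subr. Qed.

Lemma level_size_root l i : i = 0 \/ i = 2 * l -> level_size l i = 1.
Proof. by move=> ?; rewrite /level_size (_ : l - _ = 0) // /habs; lia. Qed.

Lemma level_size_succ_lower l i : i < l -> level_size l i.+1 = 2 * level_size l i.
Proof. by move=> ?; rewrite /level_size -expnS; congr (2 ^ _); rewrite /habs; lia. Qed.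

Lemma level_size_succ_upper l i : l <= i < 2 * l -> level_size l i = 2 * level_size l i.+1.
Proof. by move=> ?; rewrite /level_size -expnS; congr (2 ^ _); rewrite /habs; lia. Qed.

Lemma level_size_lower_half l i : i <= l -> level_size l i = 2 ^ i.
Proof. by move=> ?; rewrite /level_size /habs; congr (2 ^ _); lia. Qed.

Lemma level_size_upper_half l k : level_size l (l + k) = 2 ^ (l - k).
Proof. by rewrite /level_size /habs; congr (2 ^ _); lia. Qed.

Lemma sum_level_size_lower l m : m <= l -> (\sum_(i < m) level_size l i).+1 = 2 ^ m.
Proof.
elim: m => [|m IHm] le_m; first by rewrite big_ord0.
rewrite big_ord_recr /= -addSn IHm ?level_size_lower_half 1?ltnW //.
by rewrite expnS mul2n addnn.
Qed.

Lemma sum_level_size_upper l k : k <= l ->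
  (\sum_(i < l.+1 + k) level_size l i).+1 + 2 ^ (l - k) = 2 ^ l.+1 + 2 ^ l.
Proof.
elim: k => [|k IHk] le_k.
  rewrite addn0 big_ord_recr /= -addSn sum_level_size_lower // level_size_lower_half //.
  by rewrite subn0 expnS; lia.
rewrite addnS big_ord_recr /=.
have -> : level_size l (l.+1 + k) = 2 ^ (l - k.+1) by rewrite addSnnS level_size_upper_half.
rewrite -(IHk (ltnW le_k)) -(subnSK le_k) expnS.
by rewrite !addSn -addnA mul2n addnn.
Qed.

Lemma sum1_ord_lt n k : k <= n -> \sum_(j < n | j < k) 1 = k.
Proof. by move=> le_kn; rewrite (big_ord_narrow le_kn) big_const_ord iter_addn_0 mul1n. Qed.

Section RemoveEdge.

Variables (T : finType) (e : rel T).

Lemma remove_edgeC a b : remove_edge e a b =2 remove_edge e b a.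
Proof. by move=> x y; rewrite /remove_edge /= orbC. Qed.

Hypothesis e_sym : symmetric e.

Lemma remove_edge_sym a b : symmetric (remove_edge e a b).
Proof.
move=> x y; rewrite /remove_edge /= e_sym.
by case: (x == a); case: (y == b); case: (x == b); case: (y == a).
Qed.

Lemma two_edge_connected_of_cycles : 1 < #|T| -> connectedg e ->
  (forall a b, e a b -> connect (remove_edge e a b) a b) -> two_edge_connected e.
Proof.
move=> gt1_T conn_e cycle_e; split=> //; split=> // a b ab x y.
apply: (connect_sub _ (conn_e x y)) => u v uv.
have csym := sym_connect_sym (remove_edge_sym a b).
case: (boolP ((u == a) && (v == b) || (u == b) && (v == a))).
  by case/orP=> /andP[/eqP-> /eqP->]; [|rewrite csym]; apply: cycle_e.
by move=> not_ab; apply: connect1; rewrite /remove_edge /= uv not_ab.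
Qed.

End RemoveEdge.

Section Plane.

Local Open Scope R_scope.

Lemma INR_frac_inj m n s t : 0 <= s < 1 -> 0 <= t < 1 ->
  INR m + s = INR n + t -> m = n /\ s = t.
Proof.
move=> s01 t01 eq_mn; case: (ltngtP m n) => [lt_mn | lt_nm | eq_mn'].
- by have := le_INR _ _ (leP lt_mn); rewrite S_INR; lra.
- by have := le_INR _ _ (leP lt_nm); rewrite S_INR; lra.
- by rewrite eq_mn' in eq_mn *; split=> //; lra.
Qed.

Lemma convex_comb_eq a b a' b' s : 0 < s < 1 -> a <= a' -> b <= b' ->
  a + s * (b - a) = a' + s * (b' - a') -> a = a' /\ b = b'.
Proof. by move=> ? ? ? ?; split; nra. Qed.

Lemma Rabs_mult_lt d b e : 0 < e -> Rabs d < e / (Rabs b + 1) -> Rabs (d * b) < e.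
Proof.
move=> e_gt0 lt_d; rewrite Rabs_mult.
have b_ge0 := Rabs_pos b; have d_ge0 := Rabs_pos d.
have : e / (Rabs b + 1) * (Rabs b + 1) = e by field; lra.
nra.
Qed.

Definition segment (p q : point) (t : R) : point :=
  (fst p + t * (fst q - fst p), snd p + t * (snd q - snd p)).

Lemma segment_rev p q t : segment q p t = segment p q (1 - t).
Proof. by rewrite /segment; congr pair; ring. Qed.

Lemma segment0 p q : segment p q 0 = p.
Proof. by case: p => a b; rewrite /segment /=; congr pair; ring. Qed.

Lemma segment1 p q : segment p q 1 = q.
Proof. by case: p q => a b [c d]; rewrite /segment /=; congr pair; ring. Qed.

Lemma jordan_arc_segment p q : p <> q -> jordan_arc (segment p q).
Proof.
case: p q => a b [c d] neq_pq; split.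
- move=> t _ eps eps_gt0.
  have delta_gt0 z : 0 < eps / (Rabs z + 1).
    by apply: Rdiv_lt_0_compat; have := Rabs_pos z; lra.
  exists (Rmin (eps / (Rabs (c - a) + 1)) (eps / (Rabs (d - b) + 1))).
  split=> [|s _ lt_st]; first exact: Rmin_glb_lt.
  rewrite /segment /=; split.
  + rewrite (_ : _ - _ = (s - t) * (c - a)); last ring.
    by apply: Rabs_mult_lt => //; apply: Rlt_le_trans lt_st (Rmin_l _ _).
  + rewrite (_ : _ - _ = (s - t) * (d - b)); last ring.
    by apply: Rabs_mult_lt => //; apply: Rlt_le_trans lt_st (Rmin_r _ _).
- move=> s t _ _ [/= eq_x eq_y].
  have [|st | ca] := Rmult_integral (s - t) (c - a); [lra | lra |].
  have [|st | db] := Rmult_integral (s - t) (d - b); [lra | lra |].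
  by case: neq_pq; congr pair; lra.
Qed.

Lemma segment_const p t : segment p p t = p.
Proof. by case: p => a b; rewrite /segment /=; congr pair; ring. Qed.

Section StraightLineDrawing.

Variables (T : finType) (e : rel T) (pos : T -> point).

Definition noncrossing (x y u v : T) : Prop :=
  forall s t, 0 < s < 1 -> 0 < t < 1 ->
  segment (pos x) (pos y) s = segment (pos u) (pos v) t ->
  (x = u /\ y = v) \/ (x = v /\ y = u).

Lemma noncrossing_sym x y u v : noncrossing x y u v -> noncrossing u v x y.
Proof.
move=> xyuv s t s01 t01 /esym /(xyuv _ _ t01 s01).
by case=> -[-> ->]; [left | right].
Qed.

Lemma noncrossing_rev x y u v : noncrossing x y u v -> noncrossing y x u v.
Proof.
move=> xyuv s t s01 t01; rewrite segment_rev => /xyuv.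
by case=> [||[-> ->]|[-> ->]]; [lra | done | right | left].
Qed.

Variable E : T -> T -> Prop.
Hypotheses (pos_inj : injective pos) (e_oriented : forall x y, e x y -> E x y \/ E y x).
Hypothesis E_avoids :
  forall x y z t, E x y -> 0 < t < 1 -> segment (pos x) (pos y) t <> pos z.
Hypothesis E_noncrossing : forall x y u v, E x y -> E u v -> noncrossing x y u v.

Lemma e_avoids x y z t : e x y -> 0 < t < 1 -> segment (pos x) (pos y) t <> pos z.
Proof.
move=> /e_oriented[xy | yx] t01; first exact: E_avoids.
by rewrite segment_rev; apply: E_avoids yx _; lra.
Qed.

Lemma e_noncrossing x y u v : e x y -> e u v -> noncrossing x y u v.
Proof.
move=> /e_oriented[xy | yx] /e_oriented[uv | vu].
- exact: E_noncrossing.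
- exact/noncrossing_sym/noncrossing_rev/noncrossing_sym/E_noncrossing.
- exact/noncrossing_rev/E_noncrossing.
- exact/noncrossing_rev/noncrossing_sym/noncrossing_rev/noncrossing_sym/E_noncrossing.
Qed.

Lemma planar_straight_line : planar e.
Proof.
exists pos, (fun x y => segment (pos x) (pos y)); split=> //; split; last split.
- move=> x y xy; split; last by rewrite segment0 segment1.
  apply: jordan_arc_segment => eq_xy.
  (* A loop would be drawn as a constant arc lying on a vertex. *)
  by apply: (@e_avoids x y x (/ 2) xy); [lra | rewrite eq_xy segment_const].
- by move=> x y z t xy t01; apply: e_avoids.
- move=> x y u v s t xy uv not_same s01 t01 eq_st.
  by apply: not_same; apply: (e_noncrossing xy uv s01 t01).
Qed.

End StraightLineDrawing.

End Plane.

Section Hgraph.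

Variable l : nat.
Hypothesis l_gt0 : 0 < l.

Implicit Types a b u v x y z : Hvtx l.

Lemma Hvtx_bound x : hlev x <= 2 * l /\ hidx x < level_size l (hlev x).
Proof. by case: x => -[i j] lt_j; rewrite /hlev /hidx /=; split => //; have := ltn_ord i; lia. Qed.

Lemma Hvtx_inj x y : hlev x = hlev y -> hidx x = hidx y -> x = y.
Proof.
case: x y => [[i j] ?] [[i' j'] ?]; rewrite /hlev /hidx /= => ei ej.
by apply: val_inj; congr pair; apply: val_inj.
Qed.

Lemma exists_Hvtx i j : i <= 2 * l -> j < level_size l i ->
  exists x, hlev x = i /\ hidx x = j.
Proof.
move=> le_i lt_j.
have lt_i : i < 2 * l + 1 by rewrite addn1 ltnS.
have lt_j' : j < 2 ^ l := leq_trans lt_j (level_size_le l i).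
by exists (exist _ (Ordinal lt_i, Ordinal lt_j') lt_j).
Qed.

Lemma hidx_root x : (hlev x = 0 \/ hlev x = 2 * l) -> hidx x = 0.
Proof.
by move=> end_x; have [_] := Hvtx_bound x; rewrite level_size_root //; lia.
Qed.

Lemma Hvtx_root_inj x y : hlev x = hlev y -> (hlev x = 0 \/ hlev x = 2 * l) -> x = y.
Proof. by move=> e end_x; apply: Hvtx_inj; rewrite // !hidx_root -?e. Qed.

Definition tree_edge x y : Prop :=
  hlev y = (hlev x).+1 /\
  (hlev x < l /\ hidx x = hidx y %/ 2 \/ l <= hlev x /\ hidx y = hidx x %/ 2).
Definition middle_edge x y : Prop :=
  hlev x = l /\ hlev y = l /\ hidx x %/ 2 = hidx y %/ 2 /\ hidx x <> hidx y.
Definition root_edge x y : Prop := hlev x = 2 * l /\ hlev y = 0.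
Definition Hedge x y : Prop := tree_edge x y \/ middle_edge x y \/ root_edge x y.

Lemma Hdedge_Hedge x y : Hdedge x y -> Hedge x y \/ Hedge y x.
Proof.
rewrite /Hdedge /Hedge /tree_edge /middle_edge /root_edge => /or4P[] ?.
- by right; left; split; [lia | right; lia].
- by left; left; split; [lia | left; lia].
- by left; right; right; lia.
- by left; right; left; lia.
Qed.

Lemma Hedge_Hdedge x y : Hedge x y -> Hdedge x y || Hdedge y x.
Proof.
have := @hidx_root x; have := @hidx_root y.
rewrite /Hdedge /Hedge /tree_edge /middle_edge /root_edge => ends_y ends_x.
case=> [[? [?|?]]|[?|?]].
- by apply/orP; left; apply/or4P; apply: Or42; apply/and3P; split; lia.
- by apply/orP; right; apply/or4P; apply: Or41; apply/and3P; split; lia.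
- case: (boolP (odd (hidx x))) => ?.
  + by apply/orP; right; apply/or4P; apply: Or44; apply/and4P; split; lia.
  + by apply/orP; left; apply/or4P; apply: Or44; apply/and4P; split; lia.
- by apply/orP; left; apply/or4P; apply: Or43; apply/and4P; split; lia.
Qed.

Lemma Hadj_Hedge x y : Hadj x y <-> Hedge x y \/ Hedge y x.
Proof.
split; first by case/orP => /Hdedge_Hedge; last rewrite or_comm.
by case=> /Hedge_Hdedge; last rewrite orbC.
Qed.

(** * Degrees and vertex count *)

Definition neighbours (i j : nat) : seq (nat * nat) :=
  if i == 0 then [:: (1, 0); (1, 1); (2 * l, 0)]
  else if i < l then [:: (i.-1, j %/ 2); (i.+1, 2 * j); (i.+1, 2 * j + 1)]
  else if i == l then [:: (i.-1, j %/ 2); (i.+1, j %/ 2); (i, if odd j then j.-1 else j.+1)]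
  else if i < 2 * l then [:: (i.+1, j %/ 2); (i.-1, 2 * j); (i.-1, 2 * j + 1)]
  else [:: (i.-1, 0); (i.-1, 1); (0, 0)].

Lemma Hadj_neighbours x y :
  Hadj x y = ((hlev y, hidx y) \in neighbours (hlev x) (hidx x)).
Proof.
have [lev_x _] := Hvtx_bound x; have [lev_y _] := Hvtx_bound y.
have := @hidx_root x; have := @hidx_root y => ends_y ends_x.
apply/idP/idP => [/Hadj_Hedge | mem]; [| apply/Hadj_Hedge; move: mem];
  rewrite /neighbours /Hedge /tree_edge /middle_edge /root_edge.
- by repeat case: ifP => ?; rewrite ?inE ?xpair_eqE; case=> [[|[|]]|[|[|]]] ?; lia.
- by repeat case: ifP => ?; rewrite ?inE ?xpair_eqE => /or3P[] /andP[/eqP ? /eqP ?];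
    first [ left; left; lia | left; right; left; lia | left; right; right; lia
          | right; left; lia | right; right; left; lia | right; right; right; lia ].
Qed.

Lemma neighbours_uniq i j : uniq (neighbours i j).
Proof. by rewrite /neighbours; repeat case: ifP => ?; rewrite /= !inE !xpair_eqE; lia. Qed.

Lemma neighbours_size i j : size (neighbours i j) = 3.
Proof. by rewrite /neighbours; repeat case: ifP. Qed.

Lemma neighbours_valid i j p : i <= 2 * l -> j < level_size l i ->
  p \in neighbours i j -> p.1 <= 2 * l /\ p.2 < level_size l p.1.
Proof.
have := @level_size_root l 0; have := @level_size_root l (2 * l).
case: i => [|k] ends0 ends2l le_i lt_j.
  by have := @level_size_succ_lower l 0; rewrite /neighbours !inE => ? /or3P[] /eqP-> /=; lia.
have := @level_size_root l k.+1.
have := @level_size_succ_lower l k; have := @level_size_succ_lower l k.+1.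
have := @level_size_succ_upper l k; have := @level_size_succ_upper l k.+1.
by rewrite /neighbours; repeat case: ifP => ?; rewrite !inE => ? ? ? ? ? /or3P[] /eqP-> /=; lia.
Qed.

Lemma card_Hvtx_coords (L : seq (nat * nat)) : uniq L ->
  (forall p, p \in L -> p.1 <= 2 * l /\ p.2 < level_size l p.1) ->
  #|[set y : Hvtx l | (hlev y, hidx y) \in L]| = size L.
Proof.
move=> uniq_L valid_L; set coord := fun y : Hvtx l => (hlev y, hidx y).
have coord_inj : injective coord by move=> x y [] /Hvtx_inj; apply.
rewrite cardE -(size_map coord); apply/perm_size/uniq_perm => //.
  by rewrite (map_inj_uniq coord_inj) enum_uniq.
move=> [i j]; apply/mapP/idP => [[y] | mem_ij].
  by rewrite mem_enum inE => ? ->.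
have [le_i lt_j] := valid_L _ mem_ij; have [y [lev_y idx_y]] := exists_Hvtx le_i lt_j.
by exists y; rewrite ?mem_enum ?inE /coord lev_y idx_y.
Qed.

Lemma cubic_H : cubic (@Hadj l).
Proof.
move=> x; have [le_x lt_x] := Hvtx_bound x.
rewrite (eq_finset _ (Hadj_neighbours x)) card_Hvtx_coords ?neighbours_size //.
  exact: neighbours_uniq.
by move=> p; apply: neighbours_valid.
Qed.

Lemma card_Hvtx : #|{: Hvtx l}| = 2 ^ l.+1 + 2 ^ l - 2.
Proof.
have -> : #|{: Hvtx l}| = \sum_(i < l.+1 + l) \sum_(j < 2 ^ l | j < level_size l i) 1.
  rewrite (_ : l.+1 + l = 2 * l + 1); last by lia.
  by rewrite pair_big_dep /= card_sig -sum1_card; apply: eq_bigl => -[i j]; rewrite inE.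
under eq_bigr => i _ do rewrite (sum1_ord_lt (level_size_le l i)).
by have := sum_level_size_upper (leqnn l); rewrite subnn expn0 addn1 => <-; rewrite subn2.
Qed.

(** * Two-edge-connectivity *)

Lemma Hadj_sym : symmetric (@Hadj l).
Proof. by move=> x y; rewrite /Hadj /= orbC. Qed.

Lemma Hadj_up x : hlev x < 2 * l -> exists2 y, hlev y = (hlev x).+1 & Hadj x y.
Proof.
move=> lt_x; have [_ idx_x] := Hvtx_bound x.
have := @level_size_succ_lower l (hlev x); have := @level_size_succ_upper l (hlev x).
case: (ltnP (hlev x) l) => mid_x lower upper.
  have [|y [lev_y idx_y]] := @exists_Hvtx _ (2 * hidx x) lt_x; first lia.
  by exists y => //; apply/Hadj_Hedge; left; left; split=> //; left; lia.
have [|y [lev_y idx_y]] := @exists_Hvtx _ (hidx x %/ 2) lt_x; first lia.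
by exists y => //; apply/Hadj_Hedge; left; left; split=> //; right; lia.
Qed.

Lemma Hadj_down x : 0 < hlev x -> exists2 y, (hlev y).+1 = hlev x & Hadj x y.
Proof.
move=> gt0_x; have [le_x idx_x] := Hvtx_bound x.
have le_x' : (hlev x).-1 <= 2 * l by lia.
have := @level_size_succ_lower l (hlev x).-1; have := @level_size_succ_upper l (hlev x).-1.
rewrite prednK //; case: (leqP (hlev x) l) => mid_x upper lower.
  have [|y [lev_y idx_y]] := @exists_Hvtx _ (hidx x %/ 2) le_x'; first lia.
  by exists y; [lia | apply/Hadj_Hedge; right; left; split; [lia | left; lia]].
have [|y [lev_y idx_y]] := @exists_Hvtx _ (2 * hidx x) le_x'; first lia.
by exists y; [lia | apply/Hadj_Hedge; right; left; split; [lia | right; lia]].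
Qed.

Lemma Hadj_roots x y : hlev x = 2 * l -> hlev y = 0 -> Hadj x y.
Proof. by move=> top_x bot_y; apply/Hadj_Hedge; left; right; right. Qed.

Definition tree_band (lo hi : nat) : rel (Hvtx l) :=
  [rel u v | Hadj u v && [&& lo <= hlev u <= hi, lo <= hlev v <= hi &
                             (hlev u == (hlev v).+1) || (hlev v == (hlev u).+1)]].

Lemma tree_band_sym lo hi : symmetric (tree_band lo hi).
Proof. by move=> u v; apply/andP/andP=> -[uv ?]; rewrite Hadj_sym; split=> //; lia. Qed.

Lemma connect_tree_band_widen lo hi lo' hi' : lo' <= lo -> hi <= hi' ->
  subrel (connect (tree_band lo hi)) (connect (tree_band lo' hi')).
Proof.
by move=> ? ?; apply: connect_sub => u v /andP[uv ?]; apply/connect1/andP; split=> //; lia.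
Qed.

Lemma connect_tree_band_up x n : hlev x + n <= 2 * l ->
  exists2 y, hlev y = hlev x + n & connect (tree_band (hlev x) (hlev x + n)) x y.
Proof.
elim: n => [|n IHn] le_n; first by exists x; rewrite ?addn0.
have [|y lev_y xy] := IHn; first lia.
have [|z lev_z yz] := @Hadj_up y; first lia.
exists z; first lia.
apply: connect_trans (connect_tree_band_widen _ _ xy) (connect1 _); [lia | lia |].
by apply/andP; split=> //; lia.
Qed.

Lemma connect_tree_band_down x n : n <= hlev x ->
  exists2 y, hlev y = hlev x - n & connect (tree_band (hlev x - n) (hlev x)) x y.
Proof.
elim: n => [|n IHn] le_n; first by exists x; rewrite ?subn0.
have [y lev_y xy] := IHn (ltnW le_n).
have [|z lev_z yz] := @Hadj_down y; first lia.
exists z; first lia.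
apply: connect_trans (connect_tree_band_widen _ _ xy) (connect1 _); [lia | lia |].
by apply/andP; split=> //; lia.
Qed.

Lemma connect_tree_band_top x y : hlev y = 2 * l -> connect (tree_band (hlev x) (2 * l)) x y.
Proof.
move=> top_y; have [le_x _] := Hvtx_bound x.
have [|z lev_z] := @connect_tree_band_up x (2 * l - hlev x); first lia.
by rewrite subnKC // (@Hvtx_root_inj y z); [| lia | right].
Qed.

Lemma connect_tree_band_bottom x y : hlev y = 0 -> connect (tree_band 0 (hlev x)) x y.
Proof.
move=> bot_y; have [z lev_z] := @connect_tree_band_down x (hlev x) (leqnn _).
by rewrite subnn (@Hvtx_root_inj y z); [| lia | left].
Qed.

Lemma exists_level i : i <= 2 * l -> exists x, hlev x = i.
Proof. by move=> le_i; have [x [lev_x _]] := exists_Hvtx le_i (level_size_gt0 l i); exists x. Qed.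

Lemma tree_band_connected x y : connect (tree_band 0 (2 * l)) x y.
Proof.
have [t top_t] := exists_level (leqnn (2 * l)).
have to_top z : connect (tree_band 0 (2 * l)) z t.
  exact: connect_tree_band_widen (connect_tree_band_top z top_t).
by apply: connect_trans (to_top x) _; rewrite (sym_connect_sym (@tree_band_sym _ _)).
Qed.

Lemma connected_H : connectedg (@Hadj l).
Proof.
by move=> x y; apply: connect_sub (tree_band_connected x y) => u v /andP[uv _]; apply: connect1.
Qed.

Lemma connect_tree_band_remove_edge lo hi a b : ~~ tree_band lo hi a b ->
  subrel (connect (tree_band lo hi)) (connect (remove_edge (@Hadj l) a b)).
Proof.
move=> not_ab; apply: connect_sub => u v uv; apply/connect1/andP; split; first by case/andP: uv.
apply/negP => /orP[] /andP[/eqP eu /eqP ev]; subst u v.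
  by rewrite uv in not_ab.
by rewrite tree_band_sym uv in not_ab.
Qed.

Lemma tree_edge_cycle a b : hlev b = (hlev a).+1 -> connect (remove_edge (@Hadj l) a b) a b.
Proof.
move=> lev_b; have [le_b _] := Hvtx_bound b.
have [t top_t] := exists_level (leqnn (2 * l)).
have [r bot_r] := exists_level (leq0n (2 * l)).
have ar : connect (remove_edge (@Hadj l) a b) a r.
  apply: connect_tree_band_remove_edge (connect_tree_band_bottom a bot_r).
  by apply/nandP; right; lia.
have bt : connect (remove_edge (@Hadj l) a b) b t.
  apply: connect_tree_band_remove_edge (connect_tree_band_top b top_t).
  by apply/nandP; right; lia.
have rt : remove_edge (@Hadj l) a b r t.
  apply/andP; split; first by rewrite Hadj_sym Hadj_roots.
  by apply/negP => /orP[] /andP[/eqP ? /eqP ?]; subst; lia.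
apply: connect_trans ar (connect_trans (connect1 rt) _).
by rewrite (sym_connect_sym (remove_edge_sym Hadj_sym a b)).
Qed.

Lemma Hadj_cycle a b : Hadj a b -> connect (remove_edge (@Hadj l) a b) a b.
Proof.
move=> ab; case: (boolP (tree_band 0 (2 * l) a b)) => [|not_ab].
  case/andP=> _ /and3P[_ _ /orP[/eqP lev_a | /eqP lev_b]]; last exact: tree_edge_cycle.
  rewrite (sym_connect_sym (remove_edge_sym Hadj_sym a b)) (eq_connect (remove_edgeC _ a b)).
  exact: tree_edge_cycle.
exact: connect_tree_band_remove_edge (tree_band_connected a b).
Qed.

Lemma two_edge_connected_H : two_edge_connected (@Hadj l).
Proof.
apply: two_edge_connected_of_cycles Hadj_sym _ connected_H Hadj_cycle.
rewrite card_Hvtx expnS; have := leq_pexp2l (isT : 0 < 2) l_gt0; lia.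
Qed.

(** * A planar straight-line drawing *)

Local Open Scope R_scope.

Definition xcoord x : R := if (0 < hlev x < 2 * l)%N then INR (hidx x) + 1 else 0.
Definition Hpos x : point := (xcoord x, INR (hlev x)).

Local Notation arc x y := (segment (Hpos x) (Hpos y)).

Lemma xcoord_ge0 x : 0 <= xcoord x.
Proof. by rewrite /xcoord; case: ifP => _; [have := pos_INR (hidx x) | ]; lra. Qed.

Lemma xcoord_inner x : (0 < hlev x < 2 * l)%N -> xcoord x = INR (hidx x) + 1.
Proof. by rewrite /xcoord => ->. Qed.

Lemma xcoord_le x y : hlev x = hlev y -> (hidx x <= hidx y)%N -> xcoord x <= xcoord y.
Proof.
by rewrite /xcoord => <- /leP/le_INR le_xy; case: ifP => _; lra.
Qed.

Lemma xcoord_inj x y : hlev x = hlev y -> xcoord x = xcoord y -> x = y.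
Proof.
move=> lev_xy; case: (boolP (0 < hlev x < 2 * l)%N) => [inner | ends].
  rewrite !xcoord_inner -?lev_xy // => eq_xy.
  by apply: Hvtx_inj => //; apply: INR_eq; lra.
by move=> _; apply: Hvtx_root_inj => //; have [] := Hvtx_bound x; lia.
Qed.

Lemma Hpos_inj : injective Hpos.
Proof. by move=> x y [eq_x /INR_eq lev_xy]; apply: xcoord_inj. Qed.

Lemma tree_edge_interior x y s : tree_edge x y -> 0 < s < 1 ->
  snd (arc x y s) = INR (hlev x) + s /\ 0 < fst (arc x y s).
Proof.
move=> [lev_y _] s01; rewrite /segment /= lev_y S_INR; split; first ring.
have [le_y _] := Hvtx_bound y.
have := xcoord_ge0 x; have := xcoord_ge0 y.
case: (posnP (hlev x)) => [lev_x | gt0_x].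
  by rewrite (@xcoord_inner y); [have := pos_INR (hidx y); nra | lia].
by rewrite (@xcoord_inner x); [have := pos_INR (hidx x); nra | lia].
Qed.

Lemma middle_edge_interior x y s : middle_edge x y -> 0 < s < 1 ->
  snd (arc x y s) = INR l /\
  exists2 r, 0 < r < 1 & fst (arc x y s) = INR (minn (hidx x) (hidx y)) + 1 + r.
Proof.
move=> [lev_x [lev_y [half_xy neq_xy]]] s01; rewrite /segment /= lev_x lev_y; split; first ring.
rewrite !xcoord_inner ?lev_x ?lev_y; try lia.
have [succ | succ] : hidx y = (hidx x).+1 \/ hidx x = (hidx y).+1 by lia.
  by exists s => //; rewrite succ S_INR (minn_idPl (leqnSn _)); ring.
by exists (1 - s); [lra | rewrite succ S_INR (minn_idPr (leqnSn _)); ring].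
Qed.

Lemma root_edge_interior x y s : root_edge x y -> 0 < s < 1 ->
  fst (arc x y s) = 0 /\ 0 < snd (arc x y s) < INR (2 * l).
Proof.
move=> [top_x bot_y] s01; rewrite /segment /= /xcoord top_x bot_y ltnn andbF /=.
have : 0 < INR (2 * l) by apply/lt_0_INR/ltP; lia.
by split; [ring | nra].
Qed.

Lemma Hedge_avoids x y z t : Hedge x y -> 0 < t < 1 -> arc x y t <> Hpos z.
Proof.
move=> [xy | [xy | xy]] t01 eq_z.
- have [ys _] := tree_edge_interior xy t01.
  have [_ t0] : hlev z = hlev x /\ 0 = t.
    by apply: INR_frac_inj; [lra | lra | rewrite -ys eq_z /=; ring].
  lra.
- have [ys [r r01 xs]] := middle_edge_interior xy t01.
  rewrite eq_z /= in xs ys; have lev_z := INR_eq _ _ ys.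
  rewrite xcoord_inner in xs; last lia.
  have [_ r0] : hidx z = minn (hidx x) (hidx y) /\ 0 = r.
    by apply: INR_frac_inj; lra.
  lra.
- have [xs ys] := root_edge_interior xy t01.
  rewrite eq_z /= in xs ys; case: ys => gt0_z lt_z.
  rewrite xcoord_inner in xs; first by have := pos_INR (hidx z); lra.
  by apply/andP; split; apply/ltP; [apply: (INR_lt 0) | apply: INR_lt].
Qed.

Lemma tree_noncrossing x y u v : tree_edge x y -> tree_edge u v -> noncrossing Hpos x y u v.
Proof.
move=> xy uv s t s01 t01 eq_st.
have [ys _] := tree_edge_interior xy s01; have [yt _] := tree_edge_interior uv t01.
have [lev_xu st] : hlev x = hlev u /\ s = t.
  by apply: INR_frac_inj; [lra | lra | rewrite -ys -yt eq_st].
subst t; have lev_yv : hlev y = hlev v by case: xy uv => ? _ [? _]; lia.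
have eX : fst (arc x y s) = fst (arc u v s) by rewrite eq_st.
rewrite /segment /= in eX; left.
have [[le_xu le_yv] | [le_ux le_vy]] : (hidx x <= hidx u /\ hidx y <= hidx v)%N \/
    (hidx u <= hidx x /\ hidx v <= hidx y)%N by case: xy uv => ? ? [? ?]; lia.
  have [] := convex_comb_eq s01 (xcoord_le lev_xu le_xu) (xcoord_le lev_yv le_yv) eX.
  by move=> /(xcoord_inj lev_xu) -> /(xcoord_inj lev_yv) ->.
have [] := convex_comb_eq s01 (xcoord_le (esym lev_xu) le_ux)
  (xcoord_le (esym lev_yv) le_vy) (esym eX).
by move=> /(xcoord_inj (esym lev_xu)) -> /(xcoord_inj (esym lev_yv)) ->.
Qed.

Lemma middle_noncrossing x y u v :
  middle_edge x y -> middle_edge u v -> noncrossing Hpos x y u v.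
Proof.
move=> xy uv s t s01 t01 eq_st.
have [_ [r r01 xs]] := middle_edge_interior xy s01.
have [_ [r' r01' xt]] := middle_edge_interior uv t01.
have [min_eq _] : minn (hidx x) (hidx y) = minn (hidx u) (hidx v) /\ r = r'.
  by apply: INR_frac_inj; [lra | lra | have := f_equal fst eq_st; rewrite xs xt; lra].
case: xy uv min_eq => [lev_x [lev_y [? ?]]] [lev_u [lev_v [? ?]]] min_eq.
have [[idx_xu idx_yv] | [idx_xv idx_yu]] : (hidx x = hidx u /\ hidx y = hidx v)%N \/
    (hidx x = hidx v /\ hidx y = hidx u)%N by lia.
  by left; split; apply: Hvtx_inj; congruence.
by right; split; apply: Hvtx_inj; congruence.
Qed.

Lemma root_noncrossing x y u v : root_edge x y -> root_edge u v -> noncrossing Hpos x y u v.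
Proof. by move=> [? ?] [? ?] s t _ _ _; left; split; apply: Hvtx_root_inj; lia. Qed.

Lemma tree_middle_apart x y u v s t : tree_edge x y -> middle_edge u v ->
  0 < s < 1 -> 0 < t < 1 -> arc x y s <> arc u v t.
Proof.
move=> xy uv s01 t01 eq_st.
have [ys _] := tree_edge_interior xy s01; have [yt _] := middle_edge_interior uv t01.
have [_ s0] : hlev x = l /\ s = 0.
  by apply: INR_frac_inj; [lra | lra | rewrite -ys eq_st yt; ring].
lra.
Qed.

Lemma tree_root_apart x y u v s t : tree_edge x y -> root_edge u v ->
  0 < s < 1 -> 0 < t < 1 -> arc x y s <> arc u v t.
Proof.
move=> xy uv s01 t01 eq_st.
have [_ xs] := tree_edge_interior xy s01; have [xt _] := root_edge_interior uv t01.
by rewrite eq_st xt in xs; lra.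
Qed.

Lemma middle_root_apart x y u v s t : middle_edge x y -> root_edge u v ->
  0 < s < 1 -> 0 < t < 1 -> arc x y s <> arc u v t.
Proof.
move=> xy uv s01 t01 eq_st.
have [_ [r r01 xs]] := middle_edge_interior xy s01; have [xt _] := root_edge_interior uv t01.
by rewrite eq_st xt in xs; have := pos_INR (minn (hidx x) (hidx y)); lra.
Qed.

Lemma Hedge_noncrossing x y u v : Hedge x y -> Hedge u v -> noncrossing Hpos x y u v.
Proof.
move=> [xy | [xy | xy]] [uv | [uv | uv]];
  try by [apply: tree_noncrossing | apply: middle_noncrossing | apply: root_noncrossing].
all: move=> s t s01 t01 eq_st; exfalso.
- exact: tree_middle_apart xy uv s01 t01 eq_st.
- exact: tree_root_apart xy uv s01 t01 eq_st.
- exact: tree_middle_apart uv xy t01 s01 (esym eq_st).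
- exact: middle_root_apart xy uv s01 t01 eq_st.
- exact: tree_root_apart uv xy t01 s01 (esym eq_st).
- exact: middle_root_apart uv xy t01 s01 (esym eq_st).
Qed.

Lemma planar_H : planar (@Hadj l).
Proof.
apply: (planar_straight_line Hpos_inj _ Hedge_avoids Hedge_noncrossing).
by move=> x y /Hadj_Hedge.
Qed.

End Hgraph.

Theorem lemma1 (l : nat) : 1 <= l ->
  cubic (@Hadj l) /\ planar (@Hadj l) /\ two_edge_connected (@Hadj l) /\
  #|{: Hvtx l}| = 2 ^ l.+1 + 2 ^ l - 2.
Proof.
move=> l_gt0; split; first exact: cubic_H.
split; first exact: planar_H.
split; first exact: two_edge_connected_H.
exact: card_Hvtx.
Qed.
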